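(* Let $\|\cdot\|$ be a norm on $\mathbb{R}^n$ and let $\Phi\subset\mathbb{R}^n$ be a set of functions such that, for some strictly increasing function $c:(0,1]\to(0,1]$: (i) $\Phi$ contains the constant function $\mathbf 1$, $\Phi=-\Phi$, $\|\phi\|_\infty\le1$ for every $\phi\in\Phi$, and the linear span of $\Phi$ is $\mathbb{R}^n$; (ii) $\langle f,\phi\rangle\le1$ for every $f$ with $\|f\|\le1$ and every $\phi\in\Phi$; (iii) if $\|f\|_\infty\le1$ and $\|f\|\ge\epsilon$ then there exists $\phi\in\Phi$ with $\langle f,\phi\rangle\ge c(\epsilon)$. Let $\epsilon>0$ and let $\eta:\mathbb{R}_+\to\mathbb{R}_+$ be strictly decreasing. Then there is a constant $M_0$, depending only on $\epsilon$, $c$ and $\eta$, such that every $f\in\mathbb{R}^n$ taking values in $[0,1]$ can be written as $f=f_1+f_2+f_3$ where: $f_1$ and $f_1+f_3$ take values in $[0,1]$; $f_1=\sum_i\lambda_i\psi_i$ with $\sum_i|\lambda_i|=M\le M_0$ and each $\psi_i$ a (pointwise) product of functions in $\Phi$; $\|f_2\|\le\eta(M)$; and $\|f_3\|_2\le\epsilon$.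
   Context: Functions in $\mathbb{R}^n$ are functions on $\{1,\dots,n\}$, with $\langle f,g\rangle=\frac1n\sum_xf(x)g(x)$, $\|f\|_2=(\frac1n\sum_xf(x)^2)^{1/2}$, $\|f\|_\infty=\max_x|f(x)|$. *)

From mathcomp Require Import all_boot all_order all_algebra.
From mathcomp Require Import reals.
Set Implicit Arguments. Unset Strict Implicit. Unset Printing Implicit Defensive.
Import Order.TTheory GRing.Theory Num.Theory.
Local Open Scope ring_scope.

Section Defs.
Variables (R : realType) (n : nat).
Notation vec := ('I_n -> R).

Definition ip (f g : vec) : R := n%:R^-1 * \sum_(x < n) f x * g x.

Definition norm2 (f : vec) : R := Num.sqrt (ip f f).

Definition normoo (f : vec) : R := \big[Num.max/0]_(x < n) `|f x|.

Definition is_norm (N : vec -> R) : Prop :=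
  [/\ forall f, N f = 0 -> f = (fun _ => 0),
      forall (a : R) f, N (fun x => a * f x) = `|a| * N f
    & forall f g, N (fun x => f x + g x) <= N f + N g].

Definition spans (Phi : vec -> Prop) : Prop :=
  forall g : vec, exists k (a : 'I_k -> R) (phi : 'I_k -> vec),
    (forall i, Phi (phi i)) /\ forall x, g x = \sum_(i < k) a i * phi i x.

Definition is_prod_of (Phi : vec -> Prop) (psi : vec) : Prop :=
  exists k (phi : 'I_k -> vec),
    (forall i, Phi (phi i)) /\ forall x, psi x = \prod_(i < k) phi i x.

End Defs.

(* Energy increment.  For a level [L], let [e(L)] be the least value of
   [|f - g|_2^2] over [[0, 1]]-valued [g] that are combinations of products of
   functions of [Phi] with coefficients of l1-mass at most [L].  As [e] is
   nonincreasing with values in [[0, 1]], two nested pigeonholes over boundedly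
   many levels give [A <= B <= A'] with [e(A) - e(A') <= eps^2 / 4] and
   [e(B) - e(F(B)) <= c^2 / 4], where [F] depends only on [eps], [c], [eta].
   For near-minimizers [g] at [A] and [g'] at [B], take [f1 = g], [f2 = f - g'],
   [f3 = g' - g].  The parallelogram law makes [f3] small in L2.  If [f2] were
   large for the norm, (iii) would give [phi] with [<f - g', phi> >= c]; clamping
   [g' + c phi] to [[0, 1]], with the clamp replaced by a Bernstein polynomial so
   that the result is still a combination of products, would lower the energy by
   about [c^2] at level [F(B)]. *)

From mathcomp Require Import all_boot all_order all_algebra.
From mathcomp Require Import reals classical_sets.
From mathcomp Require Import ring lra.
Import Order.TTheory GRing.Theory Num.Theory.
Set Implicit Arguments. Unset Strict Implicit. Unset Printing Implicit Defensive.
Local Open Scope ring_scope.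

Section Mean.
Variables (R : realType) (n : nat).
Notation vec := ('I_n -> R).

Definition mean (h : vec) : R := n%:R^-1 * \sum_(x < n) h x.

Lemma ip_mean (a b : vec) : ip a b = mean (fun x => a x * b x).
Proof. by []. Qed.

Lemma meanD (a b : vec) : mean (fun x => a x + b x) = mean a + mean b.
Proof. by rewrite /mean big_split mulrDr. Qed.

Lemma meanZ k (a : vec) : mean (fun x => k * a x) = k * mean a.
Proof. by rewrite /mean -mulr_sumr mulrCA. Qed.

Lemma eq_mean (a b : vec) : (forall x, a x = b x) -> mean a = mean b.
Proof. by move=> eq_ab; rewrite /mean (eq_bigr _ (fun x _ => eq_ab x)). Qed.

Lemma ler_mean (a b : vec) : (forall x, a x <= b x) -> mean a <= mean b.
Proof. by move=> le_ab; rewrite /mean ler_wpM2l ?invr_ge0 ?ler0n// ler_sum. Qed.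

Lemma mean_cst k : mean (fun _ => k) = if n == 0%N then 0 else k.
Proof.
rewrite /mean sumr_const card_ord; case: eqP => [->|/eqP n0].
  by rewrite mulr0n mulr0.
by rewrite -[k *+ n]mulr_natl mulrA mulVf ?mul1r // pnatr_eq0.
Qed.

Lemma mean_ge0 (a : vec) : (forall x, 0 <= a x) -> 0 <= mean a.
Proof.
move=> a_ge0; have : mean (fun _ => 0) <= mean a by exact: ler_mean.
by rewrite mean_cst; case: eqP.
Qed.

Lemma mean_le1 (a : vec) : (forall x, a x <= 1) -> mean a <= 1.
Proof.
move=> a_le1; apply: le_trans (ler_mean a_le1) _.
by rewrite mean_cst; case: eqP; rewrite ?ler01.
Qed.

End Mean.

Lemma normoo_ge (R : realType) n (v : 'I_n -> R) x : `|v x| <= normoo v.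
Proof. exact: (le_bigmax 0 (fun y => `|v y|) x). Qed.

Lemma normoo_le1 (R : realType) n (v : 'I_n -> R) :
  (forall x, `|v x| <= 1) -> normoo v <= 1.
Proof. by move=> v_le1; apply: bigmax_le => //; rewrite ler01. Qed.

Lemma norm2_le (R : realType) n (v : 'I_n -> R) eps :
  0 <= eps -> mean (fun x => v x ^+ 2) <= eps ^+ 2 -> norm2 v <= eps.
Proof.
move=> eps_ge0 mean_le; rewrite /norm2 ip_mean.
rewrite (eq_mean (b := fun x => v x ^+ 2)) => [|x]; last by rewrite expr2.
by rewrite -[leRHS](ger0_norm eps_ge0) -sqrtr_sqr ler_wsqrtr.
Qed.

Lemma big_enum_valT (T : Type) (idx : T) (op : Monoid.com_law idx)
    (I : finType) (F : I -> T) :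
  \big[op/idx]_(i : I) F i = \big[op/idx]_(j < #|I|) F (enum_val j).
Proof. by rewrite -big_enum_val; apply: eq_bigl => i; rewrite inE. Qed.

Section Combinations.
Variables (R : realType) (n : nat) (Phi : ('I_n -> R) -> Prop).
Notation vec := ('I_n -> R).

(* Indexing families by an arbitrary [finType] rather than by ['I_k] makes
   sums and products of families immediate (sum and product index types). *)
Definition is_Phi_prod (psi : vec) := exists (I : finType) (phi : I -> vec),
  (forall i, Phi (phi i)) /\ forall x, psi x = \prod_i phi i x.

Lemma is_Phi_prod1 : is_Phi_prod (fun _ => 1).
Proof. by exists 'I_0, (fun _ _ => 1); split => [[]|x]; rewrite ?big_ord0. Qed.

Lemma is_Phi_prodM a b :
  is_Phi_prod a -> is_Phi_prod b -> is_Phi_prod (fun x => a x * b x).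
Proof.
move=> [I [pa [Pa a_def]]] [J [pb [Pb b_def]]].
exists (I + J)%type, (fun i => match i with inl j => pa j | inr j => pb j end).
by split=> [[]|x] //; rewrite big_sumType a_def b_def.
Qed.

Lemma is_prod_of_Phi_prod psi : is_Phi_prod psi -> is_prod_of Phi psi.
Proof.
move=> [I [phi [Pphi psi_def]]]; exists #|I|, (fun j => phi (enum_val j)).
by split=> // x; rewrite psi_def big_enum_valT.
Qed.

Definition Phi_comb (L : R) (g : vec) :=
  exists (I : finType) (lam : I -> R) (psi : I -> vec),
  [/\ forall i, is_Phi_prod (psi i), forall x, g x = \sum_i lam i * psi i x
    & \sum_i `|lam i| <= L].

Lemma Phi_comb_ge0 L g : Phi_comb L g -> 0 <= L.
Proof. by move=> [I [lam [psi [_ _]]]]; apply: le_trans; apply: sumr_ge0. Qed.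

Lemma Phi_comb_le L L' g : L <= L' -> Phi_comb L g -> Phi_comb L' g.
Proof.
move=> le_LL' [I [lam [psi [? ? /le_trans mass]]]].
by exists I, lam, psi; split=> //; apply: mass.
Qed.

Lemma eq_Phi_comb L g g' :
  (forall x, g x = g' x) -> Phi_comb L g -> Phi_comb L g'.
Proof.
move=> eq_gg' [I [lam [psi [? g_def ?]]]].
by exists I, lam, psi; split=> // x; rewrite -eq_gg'.
Qed.

Lemma Phi_comb_cst a : Phi_comb `|a| (fun _ => a).
Proof.
exists 'I_1, (fun _ => a), (fun _ _ => 1); split=> [_|x|].
- exact: is_Phi_prod1.
- by rewrite big_ord1 mulr1.
- by rewrite big_ord1.
Qed.

Lemma Phi_comb_Phi phi : Phi phi -> Phi_comb 1 phi.
Proof.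
move=> Pphi; exists 'I_1, (fun _ => 1), (fun _ => phi); split=> [_|x|].
- by exists 'I_1, (fun _ => phi); split=> // x; rewrite big_ord1.
- by rewrite big_ord1 mul1r.
- by rewrite big_ord1 normr1.
Qed.

Lemma Phi_combD L1 L2 g1 g2 :
  Phi_comb L1 g1 -> Phi_comb L2 g2 -> Phi_comb (L1 + L2) (fun x => g1 x + g2 x).
Proof.
move=> [I [l1 [p1 [P1 g1_def m1]]]] [J [l2 [p2 [P2 g2_def m2]]]].
exists (I + J)%type, (fun i => match i with inl j => l1 j | inr j => l2 j end),
  (fun i => match i with inl j => p1 j | inr j => p2 j end).
by split=> [[]|x|]; rewrite ?big_sumType ?g1_def ?g2_def ?lerD.
Qed.

Lemma Phi_combZ L k g : Phi_comb L g -> Phi_comb (`|k| * L) (fun x => k * g x).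
Proof.
move=> [I [lam [psi [? g_def mass]]]]; exists I, (fun i => k * lam i), psi.
split=> [//|x|].
  by rewrite g_def mulr_sumr; apply: eq_bigr => i _; rewrite mulrA.
by under eq_bigr do rewrite normrM; rewrite -mulr_sumr ler_wpM2l.
Qed.

Lemma Phi_combM L1 L2 g1 g2 :
  Phi_comb L1 g1 -> Phi_comb L2 g2 -> Phi_comb (L1 * L2) (fun x => g1 x * g2 x).
Proof.
move=> [I [l1 [p1 [P1 g1_def m1]]]] [J [l2 [p2 [P2 g2_def m2]]]].
exists (I * J)%type, (fun q => l1 q.1 * l2 q.2), (fun q x => p1 q.1 x * p2 q.2 x).
split=> [q|x|]; first exact: is_Phi_prodM.
  rewrite g1_def g2_def mulr_suml -(pair_bigA _ (fun i j => l1 i * l2 j * (p1 i x * p2 j x))).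
  by apply: eq_bigr => i _; rewrite mulr_sumr; apply: eq_bigr => j _; ring.
rewrite -(pair_bigA _ (fun i j => `|l1 i * l2 j|)) /=.
under eq_bigr do (under eq_bigr do rewrite normrM; rewrite -mulr_sumr).
by rewrite -mulr_suml ler_pM ?sumr_ge0.
Qed.

Lemma Phi_combX L g k : Phi_comb L g -> Phi_comb (L ^+ k) (fun x => g x ^+ k).
Proof.
move=> Lg; elim: k => [|k IHk].
  by rewrite expr0 -[X in Phi_comb X]normr1; apply: eq_Phi_comb (Phi_comb_cst 1).
by rewrite exprS; apply: eq_Phi_comb (Phi_combM Lg IHk) => x; rewrite exprS.
Qed.

Lemma Phi_comb_sum m (L : 'I_m -> R) (G : 'I_m -> vec) :
  (forall k, Phi_comb (L k) (G k)) ->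
  Phi_comb (\sum_k L k) (fun x => \sum_k G k x).
Proof.
elim: m L G => [|m IHm] L G LG.
  rewrite big_ord0 -[X in Phi_comb X](normr0 R).
  by apply: eq_Phi_comb (Phi_comb_cst 0) => x; rewrite big_ord0.
rewrite big_ord_recr; apply: eq_Phi_comb (Phi_combD (IHm _ _ (fun k => LG _)) (LG ord_max)).
by move=> x; rewrite big_ord_recr.
Qed.

Lemma Phi_comb_ord L g : Phi_comb L g ->
  exists k (lam : 'I_k -> R) (psi : 'I_k -> vec),
  [/\ forall i, is_prod_of Phi (psi i), forall x, g x = \sum_(i < k) lam i * psi i x
    & \sum_(i < k) `|lam i| <= L].
Proof.
move=> [I [lam [psi [Ppsi g_def mass]]]].
exists #|I|, (fun j => lam (enum_val j)), (fun j => psi (enum_val j)).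
split=> [i|x|]; first exact: is_prod_of_Phi_prod.
  by rewrite g_def big_enum_valT.
by rewrite -(big_enum_valT _ (fun i => `|lam i|)).
Qed.

End Combinations.

Section Bernstein.
Variable R : realType.

Definition bernstein_basis (m : nat) (y : R) (k : nat) :=
  'C(m, k)%:R * y ^+ k * (1 - y) ^+ (m - k).

Definition bernstein (h : R -> R) (m : nat) (y : R) :=
  \sum_(k < m.+1) h (k%:R / m%:R) * bernstein_basis m y k.

Lemma bernstein_basis_ge0 m y k : 0 <= y <= 1 -> 0 <= bernstein_basis m y k.
Proof. by case/andP=> y0 y1; rewrite /bernstein_basis !mulr_ge0 ?exprn_ge0 ?subr_ge0. Qed.

Lemma sum_bernstein_basis m y : \sum_(k < m.+1) bernstein_basis m y k = 1.
Proof.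
have := exprDn (1 - y) y m; rewrite subrK expr1n => ->.
by apply: eq_bigr => i _; rewrite /bernstein_basis -mulr_natl; ring.
Qed.

Lemma sum_bernstein_basis_shift (u : nat -> R) m y :
  \sum_(k < m.+2) u k * k%:R * bernstein_basis m.+1 y k =
  m.+1%:R * y * \sum_(k < m.+1) u k.+1 * bernstein_basis m y k.
Proof.
rewrite big_ord_recl /= mulr0 mul0r add0r mulr_sumr; apply: eq_bigr => i _.
rewrite /bump add1n /bernstein_basis /= subSS exprS.
have absorb : i.+1%:R * 'C(m.+1, i.+1)%:R = m.+1%:R * 'C(m, i)%:R :> R.
  by rewrite -!natrM -mul_bin_diag.
transitivity (u i.+1 * (i.+1%:R * 'C(m.+1, i.+1)%:R) * y * y ^+ i * (1 - y) ^+ (m - i)).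
  by ring.
by rewrite absorb; ring.
Qed.

Lemma sum_bernstein_basis_mean m y :
  \sum_(k < m.+1) k%:R * bernstein_basis m y k = m%:R * y.
Proof.
case: m => [|m]; first by rewrite big_ord1 !mul0r.
transitivity (\sum_(k < m.+2) 1 * k%:R * bernstein_basis m.+1 y k).
  by apply: eq_bigr => i _; rewrite mul1r.
rewrite (sum_bernstein_basis_shift (fun _ => 1)).
by under eq_bigr do rewrite mul1r; rewrite sum_bernstein_basis mulr1.
Qed.

Lemma sum_bernstein_basis_sqr m y :
  \sum_(k < m.+1) k%:R ^+ 2 * bernstein_basis m y k = m%:R * y * ((m%:R - 1) * y + 1).
Proof.
case: m => [|m]; first by rewrite big_ord1 expr2 !mul0r.
have -> : (m.+1%:R - 1 : R) = m%:R by rewrite -natr1 addrK.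
have <- : \sum_(k < m.+1) k.+1%:R * bernstein_basis m y k = m%:R * y + 1.
  under eq_bigr do rewrite -natr1 mulrDl mul1r.
  by rewrite big_split /= sum_bernstein_basis_mean sum_bernstein_basis.
rewrite -(sum_bernstein_basis_shift (fun k => k%:R)).
by apply: eq_bigr => i _; rewrite expr2.
Qed.

Lemma bernstein_basis_variance m y : (0 < m)%N ->
  \sum_(k < m.+1) (k%:R / m%:R - y) ^+ 2 * bernstein_basis m y k = y * (1 - y) / m%:R.
Proof.
move=> m_gt0; have m_neq0 : m%:R != 0 :> R by rewrite pnatr_eq0 -lt0n.
transitivity (\sum_(k < m.+1) (m%:R^-2 * (k%:R ^+ 2 * bernstein_basis m y k)
  - 2 * y / m%:R * (k%:R * bernstein_basis m y k) + y ^+ 2 * bernstein_basis m y k)).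
  by apply: eq_bigr => i _; field.
rewrite !big_split /= sumrN -!mulr_sumr.
by rewrite sum_bernstein_basis_sqr sum_bernstein_basis_mean sum_bernstein_basis; field.
Qed.

Lemma bernstein_in01 (h : R -> R) m y :
  0 <= y <= 1 -> (forall a, 0 <= h a <= 1) -> 0 <= bernstein h m y <= 1.
Proof.
move=> y01 h01; rewrite -(sum_bernstein_basis m y); apply/andP; split.
  apply: sumr_ge0 => i _; have /andP[? _] := h01 (i%:R / m%:R).
  by rewrite mulr_ge0 ?bernstein_basis_ge0.
apply: ler_sum => i _; have /andP[_ ?] := h01 (i%:R / m%:R).
by rewrite ler_piMl ?bernstein_basis_ge0.
Qed.

(* Each term is bounded using [|k/m - y| <= s + (k/m - y)^2 / s]; the second
   part sums to [K / s] times the variance [y (1 - y) / m]. *)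
Lemma bernstein_lipschitz_approx (h : R -> R) (K s : R) m y :
  (0 < m)%N -> 0 <= K -> 0 < s -> 0 <= y <= 1 ->
  (forall a b, 0 <= a <= 1 -> `|h a - h b| <= K * `|a - b|) ->
  `|bernstein h m y - h y| <= K * (s + 1 / (s * m%:R)).
Proof.
move=> m_gt0 K_ge0 s_gt0 y01 h_lip.
have m_pos : 0 < m%:R :> R by rewrite ltr0n.
have norm_le d : `|d| <= s + d ^+ 2 / s.
  rewrite -(ler_pM2r s_gt0) mulrDl mulfVK ?gt_eqF //.
  have : `|d| ^+ 2 = d ^+ 2 by rewrite real_normK ?num_real.
  by have := normr_ge0 d; nra.
have -> : bernstein h m y - h y =
    \sum_(k < m.+1) (h (k%:R / m%:R) - h y) * bernstein_basis m y k.
  transitivity (bernstein h m y - h y * \sum_(k < m.+1) bernstein_basis m y k).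
    by rewrite sum_bernstein_basis mulr1.
  by rewrite mulr_sumr -sumrB; apply: eq_bigr => i _; rewrite mulrBl.
apply: le_trans (ler_norm_sum _ _ _) _.
apply: le_trans (_ : \sum_(k < m.+1) (K * s * bernstein_basis m y k
  + K / s * ((k%:R / m%:R - y) ^+ 2 * bernstein_basis m y k)) <= _).
  apply: ler_sum => i _; have p_ge0 := bernstein_basis_ge0 m i y01.
  rewrite normrM (ger0_norm p_ge0).
  have km01 : 0 <= (i%:R / m%:R : R) <= 1.
    by rewrite divr_ge0 ?ler0n //= ler_pdivrMr // mul1r ler_nat -ltnS.
  apply: le_trans (ler_wpM2r p_ge0 (le_trans (h_lip _ y km01)
    (ler_wpM2l K_ge0 (norm_le (i%:R / m%:R - y))))) _.
  rewrite [leRHS](_ : _ = K * (s + (i%:R / m%:R - y) ^+ 2 / s) * bernstein_basis m y i) //.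
  by ring.
rewrite big_split /= -!mulr_sumr sum_bernstein_basis bernstein_basis_variance //.
rewrite mulr1 [leRHS]mulrDr lerD2l.
have -> : K / s * (y * (1 - y) / m%:R) = K * (y * (1 - y)) * (1 / (s * m%:R)).
  by field; rewrite !gt_eqF.
apply: ler_wpM2r; first by rewrite divr_ge0 ?mulr_ge0 ?ltW.
by rewrite -[leRHS]mulr1 ler_wpM2l //; case/andP: y01 => ? ?; nra.
Qed.

End Bernstein.

Section Clamp.
Variable R : realType.

Definition clamp01 (u : R) : R := if u < 0 then 0 else if 1 < u then 1 else u.

Lemma clamp01_in01 u : 0 <= clamp01 u <= 1.
Proof. by rewrite /clamp01; case: ltrP => ?; [|case: ltrP => ?]; apply/andP; split; lra. Qed.

Lemma clamp01_lipschitz a b : `|clamp01 a - clamp01 b| <= `|a - b|.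
Proof.
have := ler_norm (a - b); have := ler_norm (b - a); rewrite distrC => ? ?.
rewrite ler_norml /clamp01.
by case: (ltrP a 0); case: (ltrP 1 a); case: (ltrP b 0); case: (ltrP 1 b) => *;
  apply/andP; split; lra.
Qed.

Lemma clamp01_sqr_dist (f u : R) : 0 <= f <= 1 -> (f - clamp01 u) ^+ 2 <= (f - u) ^+ 2.
Proof.
by case/andP=> *; rewrite /clamp01; case: (ltrP u 0) => ?; [|case: (ltrP 1 u) => ?]; nra.
Qed.

Lemma sqr_dist_clamp_approx (f u b tau : R) : 0 <= f <= 1 -> tau <= 1 ->
  `|b - clamp01 u| <= tau -> (f - b) ^+ 2 <= (f - u) ^+ 2 + 3 * tau.
Proof.
move=> /andP[f_ge0 f_le1] tau_le1; rewrite ler_norml => /andP[? ?].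
have /andP[? ?] := clamp01_in01 u; have := clamp01_sqr_dist u (introT andP (conj f_ge0 f_le1)).
nra.
Qed.

(* [g + t phi] with [g] in [[0, 1]], [|t phi| <= 1] ranges in [[-1, 2]]; the
   change of variable [y = (g + t phi + 1) / 3] brings it into [[0, 1]], where
   Bernstein polynomials approximate. *)
Definition clamp_rescaled (y : R) : R := clamp01 (3 * y - 1).

Definition bernstein_degree (tau : R) : nat := (Num.truncn (36 / tau ^+ 2)).+1.

Lemma bernstein_clamp_approx (tau y : R) : 0 < tau -> 0 <= y <= 1 ->
  `|bernstein clamp_rescaled (bernstein_degree tau) y - clamp_rescaled y| <= tau.
Proof.
move=> tau_gt0 y01; set m := bernstein_degree tau.
have m_big : 36 <= tau ^+ 2 * m%:R.
  by rewrite mulrC -ler_pdivrMr ?exprn_gt0 //; apply/ltW/truncnS_gt.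
have m_pos : 0 < m%:R :> R by rewrite ltr0n.
have clamp_lip a b : 0 <= a <= 1 -> `|clamp_rescaled a - clamp_rescaled b| <= 3 * `|a - b|.
  move=> _; apply: le_trans (clamp01_lipschitz _ _) _.
  have -> : 3 * a - 1 - (3 * b - 1) = 3 * (a - b) by ring.
  by rewrite normrM ger0_norm.
have s_gt0 : 0 < tau / 6 by rewrite divr_gt0.
apply: le_trans (bernstein_lipschitz_approx _ _ s_gt0 y01 clamp_lip) _ => //.
rewrite (_ : 3 * (tau / 6 + _) = tau / 2 + 18 / (tau * m%:R)); last by field; rewrite !gt_eqF.
suff : 18 / (tau * m%:R) <= tau / 2 by lra.
rewrite ler_pdivrMr ?mulr_gt0 // (_ : tau / 2 * _ = tau ^+ 2 * m%:R / 2); last by field.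
lra.
Qed.

End Clamp.

Lemma Phi_comb_bernstein (R : realType) n (Phi : ('I_n -> R) -> Prop)
    (h : R -> R) L m (y : 'I_n -> R) :
  (forall a, `|h a| <= 1) -> Phi_comb Phi L y -> Phi_comb Phi L (fun x => 1 - y x) ->
  Phi_comb Phi ((2 * L) ^+ m) (fun x => bernstein h m (y x)).
Proof.
move=> h_le1 Ly L1y; have L_ge0 := Phi_comb_ge0 Ly.
have term (k : 'I_m.+1) : Phi_comb Phi ('C(m, k)%:R * (L ^+ k * L ^+ (m - k)))
    (fun x => h (k%:R / m%:R) * bernstein_basis m (y x) k).
  apply: eq_Phi_comb (Phi_comb_le _ (Phi_combZ (h (k%:R / m%:R) * 'C(m, k)%:R)
    (Phi_combM (Phi_combX k Ly) (Phi_combX (m - k) L1y)))) => [x|].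
    by rewrite /bernstein_basis; ring.
  by rewrite normrM (ger0_norm (ler0n _ _)) -mulrA ler_piMl ?mulr_ge0 ?exprn_ge0.
apply: Phi_comb_le (Phi_comb_sum term) => //.
rewrite (_ : 2 * L = L + L) ?exprDn; last by ring.
by under eq_bigr do rewrite mulr_natl mulrC.
Qed.

Section Energy.
Variables (R : realType) (n : nat) (Phi : ('I_n -> R) -> Prop) (f : 'I_n -> R).
Hypothesis Phi_le1 : forall phi, Phi phi -> normoo phi <= 1.
Hypothesis f01 : forall x, 0 <= f x <= 1.
Notation vec := ('I_n -> R).

Definition admissible (L : R) (g : vec) := Phi_comb Phi L g /\ forall x, 0 <= g x <= 1.

Definition energy (g : vec) := mean (fun x => (f x - g x) ^+ 2).

Definition min_energy (L : R) := inf (energy @` admissible L)%classic.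

Lemma admissible0 L : 0 <= L -> admissible L (fun _ => 0).
Proof.
move=> L_ge0; split=> [|x]; last by rewrite lexx ler01.
by apply: Phi_comb_le (Phi_comb_cst Phi 0); rewrite normr0.
Qed.

Lemma admissible_le L L' g : L <= L' -> admissible L g -> admissible L' g.
Proof. by move=> le_LL' [/(Phi_comb_le le_LL') ? ?]. Qed.

Lemma energy_ge0 g : 0 <= energy g.
Proof. by apply: mean_ge0 => x; apply: sqr_ge0. Qed.

Lemma energy_le1 g : (forall x, 0 <= g x <= 1) -> energy g <= 1.
Proof. by move=> g01; apply: mean_le1 => x; have := f01 x; have := g01 x; nra. Qed.

Lemma energy_lbound L : has_lbound (energy @` admissible L)%classic.
Proof. by exists 0 => _ [h _ <-]; apply: energy_ge0. Qed.

Lemma energy_nonempty L : 0 <= L -> (energy @` admissible L !=set0)%classic.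
Proof. by exists (energy (fun _ => 0)), (fun _ => 0); first exact: admissible0. Qed.

Lemma min_energy_le L g : admissible L g -> min_energy L <= energy g.
Proof. by move=> Lg; apply: (ge_inf (energy_lbound L)); exists g. Qed.

Lemma min_energy_approx L d : 0 <= L -> 0 < d ->
  exists2 g, admissible L g & energy g < min_energy L + d.
Proof.
move=> L_ge0 d_gt0.
have [_ [g Lg <-]] := inf_adherent d_gt0 (conj (energy_nonempty L_ge0) (energy_lbound L)).
by exists g.
Qed.

Lemma min_energy_in01 L : 0 <= L -> 0 <= min_energy L <= 1.
Proof.
move=> L_ge0; apply/andP; split.
  by apply: lb_le_inf (energy_nonempty L_ge0) _ => _ [g _ <-]; apply: energy_ge0.
by apply: le_trans (min_energy_le (admissible0 L_ge0)) (energy_le1 _) => x; rewrite lexx ler01.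
Qed.

Lemma le_min_energy L L' : 0 <= L -> L <= L' -> min_energy L' <= min_energy L.
Proof.
move=> L_ge0 le_LL'; apply: lb_le_inf (energy_nonempty L_ge0) _ => _ [g Lg <-].
exact/min_energy_le/(admissible_le le_LL').
Qed.

(* The midpoint of [g] and [g'] is admissible at level [B]; the parallelogram
   law then bounds [|g' - g|^2] by the energy excess of the two ends. *)
Lemma sqr_dist_near_minimizer A B g g' d : A <= B -> admissible A g -> admissible B g' ->
  energy g' < min_energy B + d ->
  mean (fun x => (g' x - g x) ^+ 2) <= 2 * (energy g - energy g') + 4 * d.
Proof.
move=> le_AB [Ag g01] [Bg' g'01] near_g'.
pose w x := 1 / 2 * g x + 1 / 2 * g' x.
have Bw : admissible B w.
  split=> [|x]; last first.
    by move: (g01 x) (g'01 x) => /andP[? ?] /andP[? ?]; rewrite /w; apply/andP; split; lra.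
  apply: Phi_comb_le (Phi_combD (Phi_combZ (1 / 2) (Phi_comb_le le_AB Ag)) (Phi_combZ (1 / 2) Bg')).
  by rewrite ger0_norm; lra.
have := min_energy_le Bw.
rewrite (@eq_mean _ _ _ (fun x => 2 * (f x - g' x) ^+ 2 + 2 * (f x - g x) ^+ 2
  + (- 4) * (f x - w x) ^+ 2)) => [|x]; last by rewrite /w; field.
rewrite !meanD !meanZ -/(energy g) -/(energy g') -/(energy w).
lra.
Qed.

Lemma Phi_bounded phi x : Phi phi -> -1 <= phi x <= 1.
Proof. by move=> Pphi; rewrite -ler_norml (le_trans (normoo_ge _ _) (Phi_le1 Pphi)). Qed.

Lemma rescaled_in01 (a b t : R) : 0 <= a <= 1 -> -1 <= b <= 1 -> 0 <= t <= 1 ->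
  0 <= (a + t * b + 1) / 3 <= 1.
Proof. by move=> /andP[? ?] /andP[? ?] /andP[? ?]; apply/andP; split; nra. Qed.

Definition clamped_step (g phi : vec) (t tau : R) (x : 'I_n) :=
  bernstein (@clamp_rescaled R) (bernstein_degree tau) ((g x + t * phi x + 1) / 3).

Lemma admissible_clamped_step B g phi t tau : admissible B g -> Phi phi -> 0 <= t <= 1 ->
  admissible ((2 * B + 4) ^+ bernstein_degree tau) (clamped_step g phi t tau).
Proof.
move=> [Bg g01] Pphi /andP[t_ge0 t_le1]; have B_ge0 := Phi_comb_ge0 Bg.
split=> [|x]; last first.
  apply: bernstein_in01 => [|a]; last exact: clamp01_in01.
  by rewrite rescaled_in01 ?Phi_bounded ?t_ge0.
have affine a b k :
    Phi_comb Phi (`|a| * B + `|b| * 1 + `|k|) (fun x => a * g x + b * phi x + k).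
  apply: Phi_combD (Phi_comb_cst _ k).
  exact: Phi_combD (Phi_combZ a Bg) (Phi_combZ b (Phi_comb_Phi Pphi)).
rewrite (_ : 2 * B + 4 = 2 * (B + 2)); last by ring.
apply: Phi_comb_bernstein => [a||].
- by have /andP[? ?] := clamp01_in01 (3 * a - 1); rewrite ger0_norm.
- apply: eq_Phi_comb (Phi_comb_le _ (affine (1 / 3) (t / 3) (1 / 3))) => [x|].
    by field.
  by rewrite !ger0_norm ?divr_ge0 //; lra.
- apply: eq_Phi_comb (Phi_comb_le _ (affine (- (1 / 3)) (- (t / 3)) (2 / 3))) => [x|].
    by field.
  by rewrite !normrN !ger0_norm ?divr_ge0 //; lra.
Qed.

(* Clamping to [[0, 1]] only brings [g + t phi] closer to [f]; replacing the
   clamp by its Bernstein approximation costs [3 tau]. *)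
Lemma energy_clamped_step g phi t tau : (forall x, 0 <= g x <= 1) -> Phi phi ->
  0 <= t <= 1 -> 0 < tau <= 1 ->
  energy (clamped_step g phi t tau) <=
    energy g - 2 * t * ip (fun x => f x - g x) phi + t ^+ 2 + 3 * tau.
Proof.
move=> g01 Pphi t01 /andP[tau_gt0 tau_le1].
apply: (@le_trans _ _ (mean (fun x => (f x - g x) ^+ 2
  + (- (2 * t)) * ((f x - g x) * phi x) + (t ^+ 2 + 3 * tau)))).
  apply: ler_mean => x; rewrite /clamped_step; have /andP[? ?] := Phi_bounded x Pphi.
  have := sqr_dist_clamp_approx (f01 x) tau_le1
    (bernstein_clamp_approx tau_gt0 (rescaled_in01 (g01 x) (Phi_bounded x Pphi) t01)).
  rewrite /clamp_rescaled (_ : 3 * _ - 1 = g x + t * phi x); last by field.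
  have : 0 <= t ^+ 2 * (1 - phi x ^+ 2) by rewrite mulr_ge0 ?sqr_ge0 //; nra.
  nra.
rewrite !meanD meanZ !mean_cst -/(energy g) -ip_mean.
by case: eqP; have := sqr_ge0 t; lra.
Qed.

End Energy.

Definition gap_count (R : realType) (g : R) : nat := (Num.truncn g^-1).+1.

Lemma small_gap (R : realType) (x : nat -> R) (g : R) :
  0 < g -> (forall i, 0 <= x i <= 1) ->
  exists2 i, (i < gap_count g)%N & x i - x i.+1 <= g.
Proof.
move=> g_gt0 x01; set N := gap_count g.
have Ng_gt1 : 1 < N%:R * g by rewrite -ltr_pdivrMr // div1r truncnS_gt.
case: (boolP [exists i : 'I_N, x i - x i.+1 <= g]) => [/existsP[i gap_i]|]; first by exists i.
rewrite negb_exists => /forallP big_gaps; exfalso.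
have drop j : (j <= N)%N -> j%:R * g <= x 0%N - x j.
  elim: j => [|j IHj] j_lt; first by rewrite mul0r subrr.
  have := big_gaps (Ordinal j_lt); rewrite -ltNge /= => gap_j.
  by have := IHj (ltnW j_lt); rewrite -natr1 mulrDl mul1r; lra.
by have := drop N (leqnn N); move: (x01 0%N) (x01 N) => /andP[? ?] /andP[? ?]; lra.
Qed.

Section Iterates.
Variables (R : realType) (F : R -> R).
Hypothesis F_ge : forall y, 0 <= y -> y <= F y.

Lemma iter_ge0 x i : 0 <= x -> 0 <= iter i F x.
Proof. by move=> x_ge0; elim: i => //= i IHi; apply: le_trans IHi (F_ge IHi). Qed.

Lemma le_iter x i j : 0 <= x -> (i <= j)%N -> iter i F x <= iter j F x.
Proof.
move=> x_ge0 /subnK <-; elim: (j - i)%N => [|k IHk]; first by rewrite add0n.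
by rewrite addSn /=; apply: le_trans IHk (F_ge (iter_ge0 _ x_ge0)).
Qed.

End Iterates.

Section Levels.
Variables (R : realType) (c eta : R -> R).

(* Property (iii) only applies to norms in [(0, 1]]. *)
Definition eta_cap (A : R) := Num.min (eta A) 1.

Definition corr (A : R) := c (eta_cap A).

Definition grow (A B : R) := (2 * B + 4) ^+ bernstein_degree (corr A ^+ 2 / 6).

Definition inner_level (A : R) (i : nat) := iter i (grow A) A.

Definition outer_level (k : nat) :=
  iter k (fun A => inner_level A (gap_count (corr A ^+ 2 / 4))) 0.

Lemma outer_levelS k :
  outer_level k.+1 = inner_level (outer_level k) (gap_count (corr (outer_level k) ^+ 2 / 4)).
Proof. by []. Qed.

Lemma grow_ge A B : 0 <= B -> B <= grow A B.
Proof. by move=> B_ge0; apply: le_trans (ler_eXnr _ _) => //; lra. Qed.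

Lemma inner_level_ge A i : 0 <= A -> A <= inner_level A i.
Proof. by move=> A_ge0; apply: (le_iter (grow_ge A) A_ge0 (leq0n i)). Qed.

Lemma le_inner_level A i j : 0 <= A -> (i <= j)%N -> inner_level A i <= inner_level A j.
Proof. exact/le_iter/grow_ge. Qed.

Lemma outer_level_ge0 k : 0 <= outer_level k.
Proof. by apply: iter_ge0 => // A; apply: inner_level_ge. Qed.

Lemma le_outer_level i j : (i <= j)%N -> outer_level i <= outer_level j.
Proof. by apply: le_iter => // A; apply: inner_level_ge. Qed.

End Levels.

Definition structured_decomposition (R : realType) n (N : ('I_n -> R) -> R)
    (Phi : ('I_n -> R) -> Prop) (eps M0 : R) (eta : R -> R) (f : 'I_n -> R) :=
  exists (f1 f2 f3 : 'I_n -> R) (k : nat) (lambda : 'I_k -> R)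
         (psi : 'I_k -> 'I_n -> R),
    (forall x, f x = f1 x + f2 x + f3 x) /\
    (forall x, 0 <= f1 x <= 1) /\
    (forall x, 0 <= f1 x + f3 x <= 1) /\
    (forall i, is_prod_of Phi (psi i)) /\
    (forall x, f1 x = \sum_(i < k) lambda i * psi i x) /\
    \sum_(i < k) `|lambda i| <= M0 /\
    N f2 <= eta (\sum_(i < k) `|lambda i|) /\
    norm2 f3 <= eps.

Section Decomposition.
Variables (R : realType) (n : nat) (N : ('I_n -> R) -> R).
Variables (Phi : ('I_n -> R) -> Prop) (c : R -> R) (f : 'I_n -> R).
Hypothesis Phi_le1 : forall phi, Phi phi -> normoo phi <= 1.
Hypothesis correlation : forall (e : R) f, 0 < e <= 1 -> normoo f <= 1 -> e <= N f ->
  exists2 phi, Phi phi & c e <= ip f phi.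
Hypothesis f01 : forall x, 0 <= f x <= 1.

Lemma norm_residual_lt ea B g' d : 0 < ea <= 1 -> 0 < c ea <= 1 ->
  admissible Phi B g' -> energy f g' < min_energy Phi f B + d -> d <= c ea ^+ 2 / 4 ->
  min_energy Phi f B -
    min_energy Phi f ((2 * B + 4) ^+ bernstein_degree (c ea ^+ 2 / 6)) <= c ea ^+ 2 / 4 ->
  N (fun x => f x - g' x) < ea.
Proof.
move=> ea01 c01 Bg' near_g' d_le gap; have /andP[c_gt0 c_le1] := c01.
rewrite ltNge; apply/negP => N_ge.
have [phi Pphi corr_phi] : exists2 phi, Phi phi & c ea <= ip (fun x => f x - g' x) phi.
  apply: correlation => //; apply: normoo_le1 => x.
  move: (f01 x) (Bg'.2 x) => /andP[? ?] /andP[? ?].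
  by rewrite ler_norml; apply/andP; split; lra.
have tau01 : 0 < c ea ^+ 2 / 6 <= 1.
  by rewrite divr_gt0 ?exprn_gt0 //= expr2; nra.
have c01' : 0 <= c ea <= 1 by rewrite ltW.
have := min_energy_le f (admissible_clamped_step Phi_le1 (c ea ^+ 2 / 6) Bg' Pphi c01').
have := energy_clamped_step Phi_le1 f01 (g := g') Bg'.2 Pphi c01' tau01.
have := ler_wpM2l (ltW c_gt0) corr_phi.
by rewrite !expr2 in d_le gap *; lra.
Qed.

Lemma decomposition_of_energy_gaps (eps ea M0 : R) (eta : R -> R) A B A' :
  0 < eps -> 0 < ea <= 1 -> 0 < c ea <= 1 ->
  0 <= A -> A <= B -> B <= A' -> A <= M0 -> (forall M, 0 <= M <= A -> ea <= eta M) ->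
  min_energy Phi f A - min_energy Phi f A' <= eps ^+ 2 / 4 ->
  min_energy Phi f B -
    min_energy Phi f ((2 * B + 4) ^+ bernstein_degree (c ea ^+ 2 / 6)) <= c ea ^+ 2 / 4 ->
  structured_decomposition N Phi eps M0 eta f.
Proof.
move=> eps_gt0 ea01 c01 A_ge0 le_AB le_BA' le_AM0 ea_le_eta gap_A gap_B.
have B_ge0 : 0 <= B := le_trans A_ge0 le_AB.
pose d := Num.min (c ea ^+ 2 / 4) (eps ^+ 2 / 12).
have d_gt0 : 0 < d by rewrite lt_min !divr_gt0 ?exprn_gt0 //; case/andP: c01.
have [g Ag near_g] := min_energy_approx Phi f A_ge0 d_gt0.
have [g' Bg' near_g'] := min_energy_approx Phi f B_ge0 d_gt0.
have N_f2 : N (fun x => f x - g' x) < ea.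
  apply: (norm_residual_lt ea01 c01 Bg' near_g' _ gap_B).
  by rewrite ge_min lexx.
have f3_small : mean (fun x => (g' x - g x) ^+ 2) <= eps ^+ 2.
  have := sqr_dist_near_minimizer le_AB Ag Bg' near_g'.
  have := le_min_energy Phi f B_ge0 le_BA'; have := min_energy_le f Bg'.
  have : d <= eps ^+ 2 / 12 by rewrite ge_min lexx orbT.
  lra.
have [k [lam [psi [psi_prod g_def mass]]]] := Phi_comb_ord Ag.1.
exists g, (fun x => f x - g' x), (fun x => g' x - g x), k, lam, psi.
have mass_ge0 : 0 <= \sum_(i < k) `|lam i| by apply: sumr_ge0.
split=> [x|]; first by ring.
split; first exact: Ag.2.
split=> [x|]; first by rewrite addrC subrK; apply: Bg'.2.
do 2!split=> //; split; first exact: le_trans mass le_AM0.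
split; first by apply: le_trans (ltW N_f2) (ea_le_eta _ _); rewrite mass_ge0.
exact: norm2_le (ltW eps_gt0) f3_small.
Qed.

End Decomposition.

Theorem theorem5p8 (R : realType) (eps : R) (c eta : R -> R) :
  0 < eps ->
  (forall t, 0 < t <= 1 -> 0 < c t <= 1) ->
  (forall s t, 0 < s -> s < t -> t <= 1 -> c s < c t) ->
  (forall t, 0 <= t -> 0 <= eta t) ->
  (forall s t, 0 <= s -> s < t -> eta t < eta s) ->
  exists M0 : R,
  forall (n : nat) (N : ('I_n -> R) -> R) (Phi : ('I_n -> R) -> Prop),
    is_norm N ->
    Phi (fun _ => 1) ->
    (forall phi, Phi phi -> Phi (fun x => - phi x)) ->
    (forall phi, Phi phi -> normoo phi <= 1) ->
    spans Phi ->
    (forall f phi, N f <= 1 -> Phi phi -> ip f phi <= 1) ->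
    (forall (e : R) f, 0 < e <= 1 -> normoo f <= 1 -> e <= N f ->
        exists2 phi, Phi phi & c e <= ip f phi) ->
    forall f : 'I_n -> R, (forall x, 0 <= f x <= 1) ->
    exists (f1 f2 f3 : 'I_n -> R) (k : nat) (lambda : 'I_k -> R)
           (psi : 'I_k -> 'I_n -> R),
      (forall x, f x = f1 x + f2 x + f3 x) /\
      (forall x, 0 <= f1 x <= 1) /\
      (forall x, 0 <= f1 x + f3 x <= 1) /\
      (forall i, is_prod_of Phi (psi i)) /\
      (forall x, f1 x = \sum_(i < k) lambda i * psi i x) /\
      \sum_(i < k) `|lambda i| <= M0 /\
      N f2 <= eta (\sum_(i < k) `|lambda i|) /\
      norm2 f3 <= eps.
Proof.
move=> eps_gt0 c01 _ eta_ge0 eta_lt.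
have eta_le s t : 0 <= s -> s <= t -> eta t <= eta s.
  by move=> s_ge0; rewrite le_eqVlt => /predU1P[->|/(eta_lt _ _ s_ge0)/ltW].
have cap01 A : 0 <= A -> 0 < eta_cap eta A <= 1.
  move=> A_ge0; rewrite lt_min ge_min lexx orbT ltr01 andbT /=.
  by have := eta_lt _ (A + 1) A_ge0 (ltr_pwDr ltr01 (lexx A)); have := eta_ge0 (A + 1); lra.
exists (outer_level c eta (gap_count (eps ^+ 2 / 4))).
(* Only the boundedness of [Phi] and property (iii) are needed. *)
move=> n N Phi _ _ _ Phi_le1 _ _ correlation f f01.
have [k k_lt gap_k] := small_gap (x := fun k => min_energy Phi f (outer_level c eta k))
  (divr_gt0 (exprn_gt0 2 eps_gt0) (ltr0n _ 4))
  (fun k => min_energy_in01 Phi f01 (outer_level_ge0 c eta k)).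
set A := outer_level c eta k; have A_ge0 : 0 <= A := outer_level_ge0 c eta k.
have [c_gt0 _] := andP (c01 _ (cap01 A A_ge0)).
have [i i_lt gap_i] := small_gap (x := fun i => min_energy Phi f (inner_level c eta A i))
  (divr_gt0 (exprn_gt0 2 c_gt0) (ltr0n _ 4))
  (fun i => min_energy_in01 Phi f01 (le_trans A_ge0 (inner_level_ge c eta i A_ge0))).
apply: (decomposition_of_energy_gaps Phi_le1 correlation f01 (ea := eta_cap eta A)
  (A := A) (B := inner_level c eta A i) (A' := outer_level c eta k.+1)) => //.
- exact: cap01.
- exact: c01 (cap01 A A_ge0).
- exact: inner_level_ge.
- by rewrite outer_levelS -/A le_inner_level // ltnW.
- exact/le_outer_level/ltnW.
- by move=> M /andP[M_ge0 M_le]; rewrite ge_min (eta_le _ _ M_ge0 M_le).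
Qed.
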